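(* Let $N\ge 1$, $M>N$, let $k_1<k_2<\dots<k_M$ be real numbers (generic), let $\theta_{01},\dots,\theta_{0M}$ be real constants and set $\theta_m=k_mx+k_m^2y+k_m^3t+\theta_{0m}$. Let $A=(a_{nm})$ be a real $N\times M$ matrix of rank $N$ all of whose nonzero $N\times N$ minors are positive, and let $$\tau(x,y,t)=\sum_{1\le m_1<\dots<m_N\le M} A(m_1,\dots,m_N)\,\exp[\theta(m_1,\dots,m_N)]\prod_{1\le s<r\le N}(k_{m_r}-k_{m_s}),$$ where $A(m_1,\dots,m_N)$ is the minor of $A$ on columns $m_1,\dots,m_N$ and $\theta(m_1,\dots,m_N)=\theta_{m_1}+\dots+\theta_{m_N}$. Let $u=2(\log\tau)_{xx}$. Fix $t$. Then, as $y\to\pm\infty$: (i) The dominant phase combinations of $\tau$ (the exponential terms of $\tau$ that dominate all others) in adjacent regions of the $xy$-plane have $N-1$ phases in common and differ by a single phase; the transition between two such dominant combinations $\theta(i,m_2,\dots,m_N)$ and $\theta(j,m_2,\dots,m_N)$ occurs along the line $L_{ij}:\theta_i=\theta_j$. (ii) Along such a transition line $L_{ij}$, $\tau(x,y,t)\sim C_i e^{\theta(i,m_2,\dots,m_N)}+C_j e^{\theta(j,m_2,\dots,m_N)}$, where the constants $C_i,C_j$ depend on $k_i,k_j,k_{m_2},\dots,k_{m_N}$ and on the minors $A(i,m_2,\dots,m_N)$, $A(j,m_2,\dots,m_N)$; consequently, in a neighborhood of $L_{ij}$, $$u(x,y,t)\sim \tfrac12(k_i-k_j)^2\,\mathrm{sech}^2\big[\tfrac12(\theta_i-\theta_j)\big],$$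 a traveling wave (asymptotic line soliton) with amplitude $|k_i-k_j|$ and direction $k_i+k_j$ (the slope of the normal to $L_{ij}$), which satisfies the dispersion relation $-4\omega l_x+l_x^4+3l_y^2=0$ with $l_x=k_i-k_j$, $l_y=k_i^2-k_j^2$, $\omega=k_i^3-k_j^3$.
   Context: This concerns the KPII equation $(-4u_t+u_{xxx}+6uu_x)_x+3u_{yy}=0$, solutions of which are given by $u=2(\log\tau)_{xx}$ with $\tau$ the Wronskian of $f_n=\sum_{m=1}^M a_{nm}e^{\theta_m}$, $n=1,\dots,N$; the displayed sum is the expansion of this Wronskian. Under the stated positivity assumptions $\tau>0$ everywhere and $u$ is a nonsingular solution. An asymptotic line soliton arising from the single-phase transition $i\to j$ is labeled by the index pair $[i,j]$. *)

From HB Require Import structures.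
From mathcomp Require Import all_boot all_order all_algebra.
From mathcomp Require Import all_classical all_reals all_analysis.
Set Implicit Arguments. Unset Strict Implicit. Unset Printing Implicit Defensive.
Import Order.TTheory GRing.Theory Num.Theory.
Local Open Scope classical_set_scope.
Local Open Scope ring_scope.

Section KP.
Variables (R : realType) (N M : nat).

Definition incr (f : {ffun 'I_N -> 'I_M}) : bool :=
  [forall n1 : 'I_N, forall n2 : 'I_N, (n1 < n2)%N ==> (f n1 < f n2)%N].

Definition minor (A : 'M[R]_(N, M)) (f : {ffun 'I_N -> 'I_M}) : R :=
  \det (colsub f A).

Definition vand (k : 'I_M -> R) (f : {ffun 'I_N -> 'I_M}) : R :=
  \prod_(r < N) \prod_(s < N | (s < r)%N) (k (f r) - k (f s)).

Definition phase (k th0 : 'I_M -> R) (m : 'I_M) (x y t : R) : R :=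
  k m * x + k m ^+ 2 * y + k m ^+ 3 * t + th0 m.

Definition Theta (k th0 : 'I_M -> R) (f : {ffun 'I_N -> 'I_M}) (x y t : R) : R :=
  \sum_(n < N) phase k th0 (f n) x y t.

Definition term (k th0 : 'I_M -> R) (A : 'M[R]_(N, M))
    (f : {ffun 'I_N -> 'I_M}) (x y t : R) : R :=
  minor A f * expR (Theta k th0 f x y t) * vand k f.

Definition tau (k th0 : 'I_M -> R) (A : 'M[R]_(N, M)) (x y t : R) : R :=
  \sum_(f : {ffun 'I_N -> 'I_M} | incr f) term k th0 A f x y t.

Definition u (k th0 : 'I_M -> R) (A : 'M[R]_(N, M)) (x y t : R) : R :=
  2 * derive1 (derive1 (fun x' => ln (tau k th0 A x' y t))) x.

Definition phases (f : {ffun 'I_N -> 'I_M}) : {set 'I_M} := [set f n | n : 'I_N].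

(* Dominant phase combination in the asymptotic region x = c*y, y -> sg*oo
   (sg = 1 : y -> +oo, sg = -1 : y -> -oo): the term of f dominates every
   other exponential term of tau there. *)
Definition dominant (k th0 : 'I_M -> R) (A : 'M[R]_(N, M)) (t sg c : R)
    (f : {ffun 'I_N -> 'I_M}) : Prop :=
  [/\ incr f, minor A f != 0 &
    forall g : {ffun 'I_N -> 'I_M}, incr g -> g != f ->
      (term k th0 A g (c * (sg * r)) (sg * r) t /
       term k th0 A f (c * (sg * r)) (sg * r) t) @[r --> +oo] --> 0].

End KP.

Definition generic (R : realType) (M : nat) (k : 'I_M -> R) : Prop :=
  forall i j p q : 'I_M, i != j -> p != q -> k i + k j = k p + k q ->
    (i == p) && (j == q) || (i == q) && (j == p).

Definition sech (R : realType) (z : R) : R := 2 / (expR z + expR (- z)).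

From HB Require Import structures.
From mathcomp Require Import all_boot all_order all_algebra.
From mathcomp Require Import all_classical all_reals all_analysis.
From mathcomp Require Import ring lra.
Import numFieldNormedType.Exports.
Import Order.TTheory GRing.Theory Num.Theory.
Local Open Scope classical_set_scope.
Local Open Scope ring_scope.
Set Implicit Arguments. Unset Strict Implicit. Unset Printing Implicit Defensive.

(* Along the ray x = c y, y -> sg oo, the term of tau indexed by f grows like
   exp (|y| * sum_(m in f) sg (c k_m + k_m^2)).  Dominance of f for c in
   (a, c0) and of g for c in (c0, b) therefore makes, by continuity in c, the
   phase sets of f and g both of maximum weight at c = c0, for the weight
   m |-> sg (c0 k_m + k_m^2), among the bases of the column matroid of A (the
   index sets of nonzero maximal minors).  By the symmetric exchange property
   of this matroid, which follows from a Pluecker-type identity between minors,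
   two maximum-weight bases differ by a single exchange i <-> j of equal
   weights; equal weights mean k_i + k_j = -c0, and genericity of k makes this
   pair unique, so every other basis has strictly smaller weight.  Hence along
   the line x = s - (k_i + k_j) y only the terms of f and g survive, with
   constant ratio, and u = 2 (log tau)_xx tends to its value for a two-term
   tau, which is the sech^2 profile. *)

Section EtaWith.
Variables (aT rT : finType) (h : aT -> rT) (p : aT) (z : rT).
Hypotheses (h_inj : injective h) (z_notin : z \notin [set h n | n : aT]).

Lemma inj_eta_with : injective [eta h with p |-> z].
Proof.
move=> n1 n2 /=.
have hz n : h n != z by apply: contraNneq z_notin => <-; apply: imset_f.
case: eqP => [->|_]; case: eqP => [->|_] // e.
- by move: (hz n2); rewrite e eqxx.
- by move: (hz n1); rewrite e eqxx.
- exact: h_inj.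
Qed.

Lemma imset_eta_with :
  [set [eta h with p |-> z] n | n : aT] = z |: ([set h n | n : aT] :\ h p).
Proof.
apply/setP => x; rewrite !inE; apply/imsetP/idP => [[n _ ->] /=|].
  case: (eqVneq n p) => [_|np]; first by rewrite eqxx.
  by rewrite (inj_eq h_inj) np imset_f ?orbT.
case/orP => [/eqP ->|/andP [xp /imsetP [n _ xE]]]; first by exists p => //=; rewrite eqxx.
have np : n != p by apply: contraNneq xp => <-; rewrite xE.
by exists n => //=; rewrite (negbTE np).
Qed.

End EtaWith.

Section IncreasingMaps.
Variables (N M : nat).
Implicit Types (f g : {ffun 'I_N -> 'I_M}) (S : {set 'I_M}).

Let ltv_trans : transitive (relpre (@nat_of_ord M) ltn) :=
  fun _ _ _ => @ltn_trans _ _ _.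

Lemma incr_lt f (n1 n2 : 'I_N) : incr f -> (n1 < n2)%N -> (f n1 < f n2)%N.
Proof. by move=> /forallP/(_ n1)/forallP/(_ n2)/implyP. Qed.

Lemma incr_inj f : incr f -> injective f.
Proof.
move=> fi n1 n2 e; case: (ltngtP n1 n2) => [lt|lt|/val_inj //].
- by have := incr_lt fi lt; rewrite e ltnn.
- by have := incr_lt fi lt; rewrite e ltnn.
Qed.

Lemma sum_phases (V : nmodType) (F : 'I_M -> V) f : incr f ->
  \sum_(m in phases f) F m = \sum_n F (f n).
Proof. by move=> fi; rewrite big_imset //= => n1 n2 _ _; apply: incr_inj. Qed.

Lemma sum_phases_exchange (V : zmodType) (F : 'I_M -> V) f g p q :
  incr f -> incr g -> p \in phases f -> q \in phases g -> phases f :\ p = phases g :\ q ->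
  \sum_n F (f n) - \sum_n F (g n) = F p - F q.
Proof.
move=> fi gi pf qg e; rewrite -!sum_phases // (big_setD1 p pf) (big_setD1 q qg) /= e.
by rewrite opprD addrACA subrr addr0.
Qed.

Lemma sorted_enum_set S : sorted (relpre val ltn) (enum S).
Proof.
rewrite -sorted_map -[enum _](eq_filter (mem_enum _)) -(eq_filter (mem_map val_inj _)).
by rewrite -filter_map (sorted_filter ltn_trans) // unlock val_ord_enum iota_ltn_sorted.
Qed.

Lemma incr_sorted f : incr f -> sorted (relpre val ltn) (map f (enum 'I_N)).
Proof.
move=> fi; have: sorted ltn (map val (enum 'I_N)).
  by rewrite enumT unlock val_ord_enum iota_ltn_sorted.
rewrite !sorted_map; apply: sub_sorted => n1 n2; exact: incr_lt.
Qed.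

Lemma map_incr_enum f : incr f -> map f (enum 'I_N) = enum (phases f).
Proof.
move=> fi; apply: (irr_sorted_eq ltv_trans (fun x => ltnn x)).
- exact: incr_sorted.
- exact: sorted_enum_set.
move=> x; rewrite mem_enum.
by apply/mapP/imsetP => [[n _ ->]|[n _ ->]]; exists n; rewrite ?mem_enum.
Qed.

Lemma phases_inj f g : incr f -> incr g -> phases f = phases g -> f = g.
Proof.
move=> fi gi e; apply/ffunP => n.
have := map_incr_enum fi; rewrite e -(map_incr_enum gi).
move=> /(congr1 (fun s => nth (f n) s n)).
by rewrite !(nth_map n) -?enumT ?size_enum_ord // ?nth_ord_enum.
Qed.

Lemma exists_incr_phases (x0 : 'I_M) S : #|S| = N ->
  exists2 f : {ffun 'I_N -> 'I_M}, incr f & phases f = S.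
Proof.
move=> cS; pose f := [ffun n : 'I_N => nth x0 (enum S) n].
have lt_size (n : 'I_N) : (n < size (enum S))%N by rewrite -cardE cS.
exists f.
  apply/forallP => n1; apply/forallP => n2; apply/implyP => lt12; rewrite !ffunE.
  by apply: (sorted_ltn_nth ltv_trans x0 (sorted_enum_set S)); rewrite ?inE.
apply/setP => x; apply/imsetP/idP => [[n _ ->]|xS].
  by rewrite ffunE -mem_enum mem_nth.
have /(nthP x0) [i ilt <-] : x \in enum S by rewrite mem_enum.
have iN : (i < N)%N by rewrite -cS cardE.
by exists (Ordinal iN) => //; rewrite ffunE.
Qed.

End IncreasingMaps.

Section RowExchange.
Variables (R : comPzRingType) (M N : nat) (B : 'M[R]_(M, N)).
Implicit Types (f g : 'I_N -> 'I_M).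

Lemma det_rowsub_eta f p m :
  \det (rowsub [eta f with p |-> m] B) = (row m B *m \adj (rowsub f B)) 0 p.
Proof.
rewrite (expand_det_row _ p) mxE; apply: eq_bigr => j _.
rewrite !mxE /= eqxx /cofactor; congr (_ * (_ * \det _)).
by apply/matrixP => i l; rewrite !mxE /= eq_sym (negbTE (neq_lift p i)).
Qed.

Lemma det_rowsub_eta_dup f p q : q != p -> \det (rowsub [eta f with p |-> f q] B) = 0.
Proof.
move=> qp; apply: (determinant_alternate qp) => j.
by rewrite !mxE /= eqxx (negbTE qp).
Qed.

Lemma det_rowsub_exchange f g p :
  \det (rowsub f B) * \det (rowsub g B) =
  \sum_m \det (rowsub [eta g with m |-> f p] B) * \det (rowsub [eta f with p |-> g m] B).
Proof.
set F := rowsub f B; set G := rowsub g B.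
have detF : (row (f p) B *m \adj F) 0 p = \det F.
  by rewrite -row_rowsub -row_mul mul_mx_adj !mxE eqxx mulr1n.
(* Write [\det G *: row (f p) B] as [row (f p) B *m \adj G *m G] and expand
   [\det F] along its row [p]. *)
have -> : \det F * \det G = ((row (f p) B *m \adj G) *m (G *m \adj F)) 0 p.
  by rewrite mulmxA -(mulmxA _ _ G) mul_adj_mx mul_mx_scalar -scalemxAl mxE detF mulrC.
rewrite mxE; apply: eq_bigr => m _; rewrite !det_rowsub_eta; congr (_ * _).
by rewrite -[row (g m) B]row_rowsub -row_mul [RHS]mxE.
Qed.

End RowExchange.

Lemma rowsub_exchange (R : idomainType) (M N : nat) (B : 'M[R]_(M, N))
    (f g : 'I_N -> 'I_M) p :
  \det (rowsub f B) != 0 -> \det (rowsub g B) != 0 ->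
  exists m, \det (rowsub [eta f with p |-> g m] B) != 0 /\
            \det (rowsub [eta g with m |-> f p] B) != 0.
Proof.
move=> dF dG; have : \det (rowsub f B) * \det (rowsub g B) != 0 by rewrite mulf_neq0.
rewrite (det_rowsub_exchange _ _ _ p) => sum_neq0.
have /existsP [m] : [exists m, \det (rowsub [eta g with m |-> f p] B) *
                               \det (rowsub [eta f with p |-> g m] B) != 0].
  apply: contraTT sum_neq0 => /existsPn zero.
  by rewrite big1 ?eqxx // => m _; apply/eqP; rewrite -[_ == 0]negbK zero.
by rewrite mulf_eq0 negb_or => /andP [dGm dFm]; exists m.
Qed.

Lemma rowsub_submx (F : fieldType) (M N : nat) (B : 'M[F]_(M, N)) (h h' : 'I_N -> 'I_M) :
  [set h n | n : 'I_N] \subset [set h' n | n : 'I_N] -> (rowsub h B <= rowsub h' B)%MS.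
Proof.
move=> /fintype.subsetP sub; apply/row_subP => n; rewrite row_rowsub.
have /sub /imsetP [q _ ->] : h n \in [set h n | n : 'I_N] by apply/imsetP; exists n.
by rewrite -row_rowsub row_sub.
Qed.

Section ColumnBases.
Variables (R : realType) (N M : nat) (A : 'M[R]_(N, M)).

Definition column_basis (S : {set 'I_M}) : Prop :=
  exists f : {ffun 'I_N -> 'I_M}, [/\ incr f, phases f = S & minor A f != 0].

Lemma minor_rowsub (f : {ffun 'I_N -> 'I_M}) : minor A f = \det (rowsub f A^T).
Proof. by rewrite /minor -det_tr; congr (\det _); apply/matrixP => i j; rewrite !mxE. Qed.

Lemma column_basis_image (x0 : 'I_M) (h : 'I_N -> 'I_M) : injective h ->
  \det (rowsub h A^T) != 0 -> column_basis [set h n | n : 'I_N].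
Proof.
move=> h_inj dh; have cardS : #|[set h n | n : 'I_N]| = N by rewrite card_imset ?card_ord.
have [f fi fS] := exists_incr_phases x0 cardS.
exists f; split => //; rewrite minor_rowsub.
have det_rank (C : 'M[R]_N) : (\det C != 0) = (\rank C == N).
  by rewrite -unitfE -unitmxE -row_free_unit.
have : (rowsub h A^T <= rowsub f A^T)%MS by rewrite rowsub_submx // -fS.
rewrite det_rank in dh; rewrite det_rank eqn_leq rank_leq_row.
by move/mxrankS; rewrite (eqP dh).
Qed.

Lemma column_basis_exchange S1 S2 y :
  column_basis S1 -> column_basis S2 -> y \in S1 -> y \notin S2 ->
  exists z, [/\ z \in S2, z \notin S1, column_basis (z |: (S1 :\ y))
               & column_basis (y |: (S2 :\ z))].
Proof.
move=> [f [fi <- dF]] [g [gi <- dG]] /imsetP [p _ ->] fpg.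
rewrite !minor_rowsub in dF dG.
have [m [dFm dGm]] := rowsub_exchange p dF dG.
have gmf : g m \notin phases f.
  apply/imsetP => [[q _ gmq]]; move: dFm; rewrite gmq det_rowsub_eta_dup ?eqxx //.
  by apply: contraNneq fpg => <-; rewrite -gmq imset_f.
exists (g m); split; rewrite ?imset_f //.
- rewrite -(imset_eta_with p (g m) (incr_inj fi)).
  exact (column_basis_image (f p) (inj_eta_with (incr_inj fi) gmf) dFm).
- rewrite -(imset_eta_with m (f p) (incr_inj gi)).
  exact (column_basis_image (f p) (inj_eta_with (incr_inj gi) fpg) dGm).
Qed.

End ColumnBases.

Section MaxWeightBases.
Variables (R : realDomainType) (T : finType) (B : {set T} -> Prop) (w : T -> R).
Implicit Types (S : {set T}) (x y z : T).

Hypothesis exchange : forall S1 S2 y, B S1 -> B S2 -> y \in S1 -> y \notin S2 ->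
  exists z, [/\ z \in S2, z \notin S1, B (z |: (S1 :\ y)) & B (y |: (S2 :\ z))].

Definition max_weight_basis S :=
  B S /\ forall S', B S' -> \sum_(x in S') w x <= \sum_(x in S) w x.

Lemma sum_exchange S y z : y \in S -> z \notin S ->
  \sum_(x in z |: (S :\ y)) w x = \sum_(x in S) w x - w y + w z.
Proof.
move=> yS zS; rewrite big_setU1 /=; last by rewrite !inE negb_and zS orbT.
by rewrite (big_setD1 y yS) /=; ring.
Qed.

Lemma max_weight_partner S1 S2 y :
  max_weight_basis S1 -> max_weight_basis S2 -> y \in S1 -> y \notin S2 ->
  exists z, [/\ z \in S2, z \notin S1 & w z = w y].
Proof.
move=> [B1 max1] [B2 max2] yS1 yS2.
have [z [zS2 zS1 B1' B2']] := exchange B1 B2 yS1 yS2.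
have := max1 _ B1'; have := max2 _ B2'; rewrite !sum_exchange // => le2 le1.
by exists z; split => //; lra.
Qed.

Hypothesis tie_unique : forall x y p q, x != y -> p != q -> w x = w y -> w p = w q ->
  (x == p) && (y == q) || (x == q) && (y == p).

Lemma max_weight_bases_adjacent S1 S2 :
  max_weight_basis S1 -> max_weight_basis S2 -> S1 != S2 ->
  exists y z, [/\ y \in S1 :\: S2, z \in S2 :\: S1, w y = w z & S1 :\ y = S2 :\ z].
Proof.
move=> max1 max2 S12.
have [y [z [yS1 yS2 zS2 zS1 wyz]]] : exists y z,
    [/\ y \in S1, y \notin S2, z \in S2, z \notin S1 & w y = w z].
  have : ~~ (S1 \subset S2) || ~~ (S2 \subset S1) by rewrite -negb_and -finset.eqEsubset.
  case/orP => /fintype.subsetPn [d dS1 dS2].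
    by have [z [? ? ?]] := max_weight_partner max1 max2 dS1 dS2; exists d, z.
  by have [y [? ? ?]] := max_weight_partner max2 max1 dS1 dS2; exists y, d.
have neq_out x x' : x \in S1 -> x' \notin S1 -> x != x'.
  by move=> xS1; apply: contraNneq => <-.
have only_y y' : y' \in S1 -> y' \notin S2 -> y' = y.
  move=> y'S1 y'S2; have [z' [z'S2 z'S1 wz']] := max_weight_partner max1 max2 y'S1 y'S2.
  have := tie_unique (neq_out _ _ y'S1 z'S1) (neq_out _ _ yS1 zS1) (esym wz') wyz.
  by case/orP => /andP [/eqP // e _]; move: zS1; rewrite -e y'S1.
have only_z z' : z' \in S2 -> z' \notin S1 -> z' = z.
  move=> z'S2 z'S1; have [y' [y'S1 y'S2 wy']] := max_weight_partner max2 max1 z'S2 z'S1.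
  have := tie_unique (neq_out _ _ y'S1 z'S1) (neq_out _ _ yS1 zS1) wy' wyz.
  by case/orP => /andP [/eqP e /eqP //]; move: zS1; rewrite -e y'S1.
exists y, z; rewrite !inE yS1 yS2 zS1 zS2; split => //; apply/setP => x; rewrite !inE.
case: (eqVneq x y) => [->|xy]; first by rewrite (negbTE yS2) andbF.
case: (eqVneq x z) => [->|xz] /=; first by rewrite (negbTE zS1).
case xS1: (x \in S1); case xS2: (x \in S2) => //.
- by move: xy; rewrite (only_y x) ?xS2 ?eqxx.
- by move: xz; rewrite (only_z x) ?xS1 ?eqxx.
Qed.

Lemma max_weight_bases_at_most_two S1 S2 S3 :
  max_weight_basis S1 -> max_weight_basis S2 -> max_weight_basis S3 ->
  S1 != S2 -> S1 != S3 -> S2 = S3.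
Proof.
move=> max1 max2 max3 S12 S13.
have [y [z [yS zS wyz e2]]] := max_weight_bases_adjacent max1 max2 S12.
have [y' [z' [y'S z'S wyz' e3]]] := max_weight_bases_adjacent max1 max3 S13.
move: yS zS y'S z'S; rewrite !inE.
move=> /andP [yS2 yS1] /andP [zS1 zS2] /andP [y'S3 y'S1] /andP [z'S1 z'S3].
have neq x x' : x \in S1 -> x' \notin S1 -> x != x' by move=> xS1; apply: contraNneq => <-.
have /orP [/andP [/eqP ey /eqP ez]|/andP [/eqP e _]] :=
  tie_unique (neq _ _ y'S1 z'S1) (neq _ _ yS1 zS1) wyz' wyz; last first.
  by move: zS1; rewrite -e y'S1.
by rewrite -(finset.setD1K zS2) -(finset.setD1K z'S3) -e2 -e3 ey ez.
Qed.

End MaxWeightBases.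

Section TauDerivatives.
Variables (R : realType) (N M : nat) (k th0 : 'I_M -> R) (A : 'M[R]_(N, M)).
Implicit Types (h : {ffun 'I_N -> 'I_M}).

Definition ksum h := \sum_n k (h n).

Definition tau_coef h := minor A h * vand k h.

Lemma termE h x y t : term k th0 A h x y t = tau_coef h * expR (Theta k th0 h x y t).
Proof. by rewrite /term mulrAC. Qed.

Definition tau_moment (i : nat) (y t x : R) :=
  \sum_(h | incr h) ksum h ^+ i * term k th0 A h x y t.

Lemma tau_moment0 x y t : tau k th0 A x y t = tau_moment 0 y t x.
Proof. by apply: eq_bigr => h _; rewrite mul1r. Qed.

Lemma Theta_x h x y t : Theta k th0 h x y t = ksum h * x + Theta k th0 h 0 y t.
Proof.
rewrite /Theta /ksum mulr_suml -big_split /=.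
by apply: eq_bigr => n _; rewrite /phase; ring.
Qed.

Lemma is_derive_term h (y t x : R) :
  is_derive x 1 (term k th0 A h ^~ y ^~ t) (ksum h * term k th0 A h x y t).
Proof.
set a := ksum h; set b := Theta k th0 h 0 y t; set C := tau_coef h.
have D := is_deriveZ C (is_derive1_comp (is_derive_expR _)
  (is_deriveD (is_deriveZ a (is_derive_id x 1)) (is_derive_cst b x 1))).
(* [F] is [z |-> C * expR (a * z + b)] up to unfolding the pointwise operations. *)
set F := (C \*: _) in D.
have -> : term k th0 A h ^~ y ^~ t = F.
  apply/funext => z; change (term k th0 A h z y t = C * expR (a * z + b)).
  by rewrite termE Theta_x /a /b /C; ring.
apply: (is_derive_eq D).
change (C * (expR (a * x + b) * (a * 1 + 0)) = a * term k th0 A h x y t).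
by rewrite termE Theta_x /a /b /C; ring.
Qed.

Lemma is_derive_tau_moment i (y t x : R) :
  is_derive x 1 (tau_moment i y t) (tau_moment i.+1 y t x).
Proof.
have -> : tau_moment i y t = \sum_(h | incr h) (fun x => ksum h ^+ i * term k th0 A h x y t).
  by rewrite fct_sumE.
rewrite /tau_moment; elim/big_ind2: _ => [|d1 f1 d2 f2|h _].
- exact: is_derive_cst.
- exact: is_deriveD.
- by rewrite exprS -mulrA mulrCA; exact: is_deriveZ (is_derive_term h y t x).
Qed.

End TauDerivatives.

Section TauPositivity.
Variables (R : realType) (N M : nat) (k th0 : 'I_M -> R) (A : 'M[R]_(N, M)).
Hypothesis k_incr : forall i j : 'I_M, (i < j)%N -> k i < k j.
Hypothesis minor_pos :
  forall f : {ffun 'I_N -> 'I_M}, incr f -> minor A f != 0 -> 0 < minor A f.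
Implicit Types (h : {ffun 'I_N -> 'I_M}).

Lemma vand_gt0 h : incr h -> 0 < vand k h.
Proof.
move=> hi; apply: prodr_gt0 => r _; apply: prodr_gt0 => s sr.
by rewrite subr_gt0 k_incr // (incr_lt hi).
Qed.

Lemma tau_coef_gt0 h : incr h -> minor A h != 0 -> 0 < tau_coef k A h.
Proof. by move=> hi hm; rewrite mulr_gt0 ?minor_pos ?vand_gt0. Qed.

Lemma term_ge0 h x y t : incr h -> 0 <= term k th0 A h x y t.
Proof.
move=> hi; rewrite termE mulr_ge0 ?expR_ge0 //.
have [h0|/(tau_coef_gt0 hi)/ltW //] := eqVneq (minor A h) 0.
by rewrite /tau_coef h0 mul0r.
Qed.

Lemma term_gt0 h x y t : incr h -> minor A h != 0 -> 0 < term k th0 A h x y t.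
Proof. by move=> hi hm; rewrite termE mulr_gt0 ?expR_gt0 ?tau_coef_gt0. Qed.

Variable f0 : {ffun 'I_N -> 'I_M}.
Hypotheses (f0_incr : incr f0) (f0_minor : minor A f0 != 0).

Lemma tau_moment0_gt0 y t x : 0 < tau_moment k th0 A 0 y t x.
Proof.
rewrite /tau_moment (bigD1 f0) //= expr0 mul1r ltr_pwDl ?term_gt0 //.
by apply: sumr_ge0 => h /andP [hi _]; rewrite mul1r term_ge0.
Qed.

Lemma derive1_ln_tau y t :
  derive1 (fun x => ln (tau k th0 A x y t)) =
  (fun x => tau_moment k th0 A 1 y t x / tau_moment k th0 A 0 y t x).
Proof.
apply/funext => x; under eq_fun do rewrite tau_moment0.
have D := is_derive1_comp (is_derive1_ln (tau_moment0_gt0 y t x))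
  (is_derive_tau_moment k th0 A 0 y t x).
by rewrite derive1E; case: D => _ ->; rewrite mulrC.
Qed.

Lemma u_moments x y t : u k th0 A x y t =
  2 * ((tau_moment k th0 A 2 y t x * tau_moment k th0 A 0 y t x
        - tau_moment k th0 A 1 y t x ^+ 2) / tau_moment k th0 A 0 y t x ^+ 2).
Proof.
rewrite /u derive1_ln_tau.
set T0 := tau_moment k th0 A 0 y t; set T1 := tau_moment k th0 A 1 y t.
have T0x : T0 x != 0 by rewrite gt_eqF // tau_moment0_gt0.
have D := is_deriveM (is_derive_tau_moment k th0 A 1 y t x)
  (is_deriveV T0x (is_derive_tau_moment k th0 A 0 y t x)).
rewrite derive1E; case: D => _ ->; rewrite -/(T0 x) -/(T1 x) /GRing.scale /=.
by field.
Qed.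

End TauPositivity.

Section ExpLimits.
Variable R : realType.

Lemma expR_affine_cvg0 (l d : R) : l < 0 -> expR (r * l + d) @[r --> +oo] --> 0.
Proof.
move=> l0; apply/cvgr0Pnorm_lt => e e0.
have nl : 0 < - l by rewrite oppr_gt0.
near=> r.
rewrite ger0_norm ?expR_ge0 // -[X in _ < X](@lnK R e) ?posrE // ltr_expR.
have : (d - ln e) / (- l) < r by near: r; apply: nbhs_pinfty_gt; rewrite num_real.
rewrite ltr_pdivrMr // => H; lra.
Unshelve. all: by end_near.
Qed.

Lemma expR_affine_not_cvg0 (C l d : R) : C != 0 -> 0 <= l ->
  ~ (C * expR (r * l + d) @[r --> +oo] --> 0).
Proof.
move=> C0 l0 /cvgr0Pnorm_lt cvg0.
have [|r r0] := pinfty_ex_gt0 (cvg0 (`|C| * expR d) _).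
  by rewrite mulr_gt0 ?normr_gt0 ?expR_gt0.
rewrite normrM (ger0_norm (expR_ge0 _)) ltr_pM2l ?normr_gt0 // ltr_expR.
by rewrite ltNge lerDr mulr_ge0 // ltW.
Qed.

End ExpLimits.

Lemma affine_lt0_closure (R : realFieldType) (al be a b : R) : a < b ->
  (forall c, a < c -> c < b -> c * al + be < 0) -> a * al + be <= 0 /\ b * al + be <= 0.
Proof.
move=> ab neg; set m := (a + b) / 2.
have am : a < m by rewrite /m; lra.
have mb : m < b by rewrite /m; lra.
have vm := neg m am mb.
(* A positive value at an endpoint would give a root between it and [m]. *)
have end_le0 e : a <= e -> e <= b -> e * al + be <= 0.
  move=> ae eb; rewrite leNgt; apply/negP => ve.
  set l := (e * al + be) / ((e * al + be) - (m * al + be)).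
  have l0 : 0 < l by rewrite divr_gt0 // subr_gt0 (lt_trans vm).
  have l1 : l < 1 by rewrite ltr_pdivrMr ?mul1r ?subr_gt0 ?(lt_trans vm) //; lra.
  have vc : (e + l * (m - e)) * al + be = 0.
    by rewrite /l; field; rewrite subr_eq0 gt_eqF // (lt_trans vm).
  have ac : a < e + l * (m - e) by nra.
  have cb : e + l * (m - e) < b by nra.
  by have := neg _ ac cb; rewrite vc ltxx.
by split; apply: end_le0; rewrite ?lexx // ltW.
Qed.

Section Rates.
Variables (R : realType) (N M : nat) (k th0 : 'I_M -> R) (A : 'M[R]_(N, M)).
Hypothesis k_incr : forall i j : 'I_M, (i < j)%N -> k i < k j.
Hypothesis minor_pos :
  forall f : {ffun 'I_N -> 'I_M}, incr f -> minor A f != 0 -> 0 < minor A f.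
Implicit Types (f h : {ffun 'I_N -> 'I_M}).

Definition slope (sg c : R) (m : 'I_M) := sg * (c * k m + k m ^+ 2).

Definition rate sg c h := \sum_n slope sg c (h n).

Lemma rate_affine sg c h : rate sg c h = c * (sg * ksum k h) + rate sg 0 h.
Proof.
rewrite /rate /ksum mulr_sumr mulr_sumr -big_split /=.
by apply: eq_bigr => n _; rewrite /slope; ring.
Qed.

Lemma Theta_line h (s c sg r t : R) :
  Theta k th0 h (s + c * (sg * r)) (sg * r) t = r * rate sg c h + Theta k th0 h s 0 t.
Proof.
rewrite /Theta /rate mulr_sumr -big_split /=.
by apply: eq_bigr => n _; rewrite /phase /slope; ring.
Qed.

Lemma term_ratio_line f h (s c sg r t : R) : incr f -> minor A f != 0 ->
  term k th0 A h (s + c * (sg * r)) (sg * r) t /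
    term k th0 A f (s + c * (sg * r)) (sg * r) t =
  tau_coef k A h / tau_coef k A f *
    expR (r * (rate sg c h - rate sg c f) + (Theta k th0 h s 0 t - Theta k th0 f s 0 t)).
Proof.
move=> fi fm; rewrite !termE !Theta_line.
have cf := tau_coef_gt0 k_incr minor_pos fi fm.
rewrite [expR (_ * rate sg c h + _)](_ : _ =
    expR (r * (rate sg c h - rate sg c f) + (Theta k th0 h s 0 t - Theta k th0 f s 0 t)) *
    expR (r * rate sg c f + Theta k th0 f s 0 t)).
  by field; rewrite !gt_eqF ?expR_gt0.
by rewrite -expRD; congr expR; ring.
Qed.

Lemma dominant_rate_lt (t sg c : R) f h : dominant k th0 A t sg c f ->
  incr h -> minor A h != 0 -> h != f -> rate sg c h < rate sg c f.
Proof.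
move=> [fi fm dom] hi hm hf; rewrite ltNge -subr_ge0; apply/negP => le.
have := dom h hi hf; under eq_fun do rewrite -[c * _]add0r term_ratio_line //.
apply: expR_affine_not_cvg0 le.
by rewrite mulf_neq0 ?invr_eq0 // gt_eqF // tau_coef_gt0.
Qed.

Lemma rate_phases sg c h : incr h -> rate sg c h = \sum_(m in phases h) slope sg c m.
Proof. by move=> hi; rewrite sum_phases. Qed.

Lemma dominant_max_weight (t sg a b e : R) f : a < b ->
  (forall c, a < c -> c < b -> dominant k th0 A t sg c f) -> e = a \/ e = b ->
  max_weight_basis (column_basis A) (slope sg e) (phases f).
Proof.
move=> ab dom ae; have [fi fm _] := dom ((a + b) / 2) ltac:(lra) ltac:(lra).
split; first by exists f.
move=> _ [h [hi <- hm]]; rewrite -!rate_phases //.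
have [-> //|hf] := eqVneq h f.
pose al := sg * ksum k h - sg * ksum k f; pose be := rate sg 0 h - rate sg 0 f.
have diffE c : rate sg c h - rate sg c f = c * al + be.
  by rewrite !(rate_affine _ c) /al /be; ring.
have [lea leb] : a * al + be <= 0 /\ b * al + be <= 0.
  apply: affine_lt0_closure ab _ => c ac cb.
  by rewrite -diffE subr_lt0 (dominant_rate_lt (dom c ac cb)).
by rewrite -subr_le0 diffE; case: ae => ->.
Qed.

End Rates.

Section TransitionLine.
Variables (R : realType) (N M : nat) (k th0 : 'I_M -> R) (A : 'M[R]_(N, M)).
Hypothesis k_incr : forall i j : 'I_M, (i < j)%N -> k i < k j.
Hypothesis minor_pos :
  forall f : {ffun 'I_N -> 'I_M}, incr f -> minor A f != 0 -> 0 < minor A f.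
Variables (t sg d s : R) (f g : {ffun 'I_N -> 'I_M}).
Hypotheses (f_incr : incr f) (g_incr : incr g).
Hypotheses (f_minor : minor A f != 0) (g_minor : minor A g != 0) (gf : g != f).
Hypothesis rate_eq : rate k sg (- d) g = rate k sg (- d) f.
Hypothesis rate_lt : forall h : {ffun 'I_N -> 'I_M}, incr h -> minor A h != 0 ->
  h != f -> h != g -> rate k sg (- d) h < rate k sg (- d) f.

Local Notation x_ r := (s - d * (sg * r)).
Definition line_ratio h r :=
  term k th0 A h (x_ r) (sg * r) t / term k th0 A f (x_ r) (sg * r) t.

Definition ratio_gf : R :=
  tau_coef k A g / tau_coef k A f * expR (Theta k th0 g s 0 t - Theta k th0 f s 0 t).

Lemma ratio_gf_gt0 : 0 < ratio_gf.
Proof. by rewrite mulr_gt0 ?divr_gt0 ?expR_gt0 ?tau_coef_gt0. Qed.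

Lemma line_ratioE h r : line_ratio h r = tau_coef k A h / tau_coef k A f *
  expR (r * (rate k sg (- d) h - rate k sg (- d) f) +
        (Theta k th0 h s 0 t - Theta k th0 f s 0 t)).
Proof. by rewrite /line_ratio -mulNr term_ratio_line. Qed.

Lemma term_ratio_g r :
  term k th0 A g (x_ r) (sg * r) t / term k th0 A f (x_ r) (sg * r) t = ratio_gf.
Proof. by rewrite -/(line_ratio g r) line_ratioE rate_eq subrr mulr0 add0r. Qed.

Lemma line_ratio_cvg h : incr h -> line_ratio h r @[r --> +oo] -->
  (if h == f then 1 else if h == g then ratio_gf else 0).
Proof.
move=> hi; have [->|hf] := eqVneq h f.
  by under eq_fun do rewrite /line_ratio divff ?gt_eqF ?term_gt0 //; exact: cvg_cst.
have [->|hg] := eqVneq h g.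
  by under eq_fun do rewrite /line_ratio term_ratio_g; exact: cvg_cst.
under eq_fun do rewrite line_ratioE.
have [hm|/rate_lt lt] := eqVneq (minor A h) 0.
  by under eq_fun do rewrite /tau_coef hm !mul0r; exact: cvg_cst.
rewrite -(mulr0 (tau_coef k A h / tau_coef k A f)); apply: cvgM; first exact: cvg_cst.
by apply: expR_affine_cvg0; rewrite subr_lt0 lt.
Qed.

Lemma tau_moment_ratio_cvg i :
  tau_moment k th0 A i (sg * r) t (x_ r) / term k th0 A f (x_ r) (sg * r) t
    @[r --> +oo] --> ksum k f ^+ i + ksum k g ^+ i * ratio_gf.
Proof.
under eq_fun do rewrite /tau_moment mulr_suml.
under eq_fun do under eq_bigr do rewrite -mulrA -/(line_ratio _ _).
have -> : ksum k f ^+ i + ksum k g ^+ i * ratio_gf =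
  \sum_(h | incr h) ksum k h ^+ i * (if h == f then 1 else if h == g then ratio_gf else 0).
  rewrite (bigD1 f) //= (bigD1 g) /=; last by rewrite g_incr gf.
  rewrite eqxx (negbTE gf) eqxx mulr1 big1 ?addr0 // => h /andP [/andP [_ hf] hg].
  by rewrite (negbTE hf) (negbTE hg) mulr0.
apply: cvg_big => [|h hi]; first exact: add_continuous.
by apply: cvgM; [exact: cvg_cst|exact: line_ratio_cvg].
Qed.

Lemma tau_line_cvg :
  tau k th0 A (x_ r) (sg * r) t /
    (term k th0 A f (x_ r) (sg * r) t + term k th0 A g (x_ r) (sg * r) t)
    @[r --> +oo] --> (1 : R).
Proof.
have r1 : 1 + ratio_gf != 0 by rewrite gt_eqF // addr_gt0 ?ratio_gf_gt0.
have E r : tau k th0 A (x_ r) (sg * r) t /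
    (term k th0 A f (x_ r) (sg * r) t + term k th0 A g (x_ r) (sg * r) t) =
  tau_moment k th0 A 0 (sg * r) t (x_ r) / term k th0 A f (x_ r) (sg * r) t /
    (1 + ratio_gf).
  have tf : term k th0 A f (x_ r) (sg * r) t != 0 by rewrite gt_eqF ?term_gt0.
  rewrite tau_moment0 -(term_ratio_g r); field.
  by rewrite tf gt_eqF ?addr_gt0 ?term_gt0.
under eq_fun do rewrite E.
have := cvgM (tau_moment_ratio_cvg (i := 0)) (cvg_cst (1 + ratio_gf)^-1).
by rewrite !expr0 mul1r divff //; apply.
Qed.

Lemma u_line_cvg : u k th0 A (x_ r) (sg * r) t @[r --> +oo] -->
  2 * ratio_gf * (ksum k f - ksum k g) ^+ 2 / (1 + ratio_gf) ^+ 2.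
Proof.
pose rho i r := tau_moment k th0 A i (sg * r) t (x_ r) / term k th0 A f (x_ r) (sg * r) t.
pose L i := ksum k f ^+ i + ksum k g ^+ i * ratio_gf.
have rho_cvg i : rho i r @[r --> +oo] --> L i := tau_moment_ratio_cvg (i := i).
have L0 : L 0 != 0 by rewrite /L !expr0 mul1r gt_eqF // addr_gt0 ?ratio_gf_gt0.
have -> : 2 * ratio_gf * (ksum k f - ksum k g) ^+ 2 / (1 + ratio_gf) ^+ 2 =
    2 * ((L 2 * L 0 - L 1 * L 1) / (L 0 * L 0)).
  by rewrite /L !expr0 mul1r !expr1; field; rewrite gt_eqF // addr_gt0 ?ratio_gf_gt0.
have E r : u k th0 A (x_ r) (sg * r) t =
    2 * ((rho 2 r * rho 0 r - rho 1 r * rho 1 r) / (rho 0 r * rho 0 r)).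
  have tf : term k th0 A f (x_ r) (sg * r) t != 0 by rewrite gt_eqF ?term_gt0.
  have t0 : tau_moment k th0 A 0 (sg * r) t (x_ r) != 0.
    by rewrite gt_eqF ?(tau_moment0_gt0 th0 k_incr minor_pos f_incr f_minor).
  by rewrite (u_moments th0 k_incr minor_pos f_incr f_minor) /rho; field; rewrite tf t0.
under eq_fun do rewrite E.
apply: cvgM; first exact: cvg_cst.
apply: cvgM; first by apply: cvgB; apply: cvgM.
by apply: cvgV; [rewrite mulf_neq0|apply: cvgM].
Qed.

End TransitionLine.

Lemma sech_half_sqr (R : realType) (z : R) :
  sech (z / 2) ^+ 2 = 4 * expR z / (expR z + 1) ^+ 2.
Proof.
have e0 : 0 < expR (z / 2) := expR_gt0 _.
have -> : expR z = expR (z / 2) * expR (z / 2) by rewrite -expRD; congr expR; field.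
rewrite /sech expRN; field.
by rewrite !gt_eqF ?addr_gt0 ?mulr_gt0 ?invr_gt0.
Qed.

Section Soliton.
Variables (R : realType) (N M : nat) (k th0 : 'I_M -> R) (A : 'M[R]_(N, M)).
Hypothesis k_incr : forall i j : 'I_M, (i < j)%N -> k i < k j.
Hypothesis minor_pos :
  forall f : {ffun 'I_N -> 'I_M}, incr f -> minor A f != 0 -> 0 < minor A f.
Implicit Types (f g : {ffun 'I_N -> 'I_M}).

(* The right-hand side is [2 (log tau)_xx] for the two-term [tau = term f + term g],
   [rho] being the ratio of its terms. *)
Lemma soliton_profile f g p q x y t :
  incr f -> incr g -> minor A f != 0 -> minor A g != 0 ->
  p \in phases f -> q \in phases g -> phases f :\ p = phases g :\ q ->
  let rho := term k th0 A g x y t / term k th0 A f x y t in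
  2^-1 * (k p - k q) ^+ 2 *
    sech ((phase k th0 p x y t - phase k th0 q x y t
           + ln ((minor A f * vand k f) / (minor A g * vand k g))) / 2) ^+ 2 =
  2 * rho * (ksum k f - ksum k g) ^+ 2 / (1 + rho) ^+ 2.
Proof.
move=> fi gi fm gm pf qg fgpq rho.
have Tf := term_gt0 th0 k_incr minor_pos x y t fi fm.
have Tg := term_gt0 th0 k_incr minor_pos x y t gi gm.
have dk : ksum k f - ksum k g = k p - k q by apply: sum_phases_exchange.
have dTheta : Theta k th0 f x y t - Theta k th0 g x y t =
    phase k th0 p x y t - phase k th0 q x y t.
  exact: (sum_phases_exchange (fun m => phase k th0 m x y t)).
rewrite sech_half_sqr expRD lnK ?posrE ?divr_gt0 ?tau_coef_gt0 //.
rewrite -dTheta expRD expRN dk /rho !termE.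
have cf := tau_coef_gt0 k_incr minor_pos fi fm.
have cg := tau_coef_gt0 k_incr minor_pos gi gm.
rewrite /tau_coef in cf cg *; field.
by rewrite fm gm !gt_eqF ?addr_gt0 ?mulr_gt0 ?expR_gt0 ?(vand_gt0 k_incr) ?minor_pos.
Qed.

End Soliton.

Section GenericTies.
Variables (R : realType) (N M : nat) (k : 'I_M -> R) (A : 'M[R]_(N, M)).
Hypothesis k_incr : forall i j : 'I_M, (i < j)%N -> k i < k j.
Implicit Types (f g : {ffun 'I_N -> 'I_M}).

Lemma slope_tie (sg c : R) (x y : 'I_M) : sg != 0 -> x != y ->
  slope k sg c x = slope k sg c y -> k x + k y = - c.
Proof.
move=> sg0 xy eq_xy; have kxy : k x - k y != 0.
  rewrite subr_eq0; case: (ltngtP x y) => [/k_incr/lt_eqF -> //|/k_incr/gt_eqF -> //|].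
  by move/val_inj => exy; rewrite exy eqxx in xy.
have : sg * (k x - k y) * (c + k x + k y) = 0.
  by rewrite -(subrr (slope k sg c y)) -{1}eq_xy /slope; ring.
by move/eqP; rewrite !mulf_eq0 (negbTE sg0) (negbTE kxy) /= => /eqP; lra.
Qed.

Lemma slope_tie_unique (sg c : R) : generic k -> sg != 0 -> forall x y p q : 'I_M,
  x != y -> p != q -> slope k sg c x = slope k sg c y -> slope k sg c p = slope k sg c q ->
  (x == p) && (y == q) || (x == q) && (y == p).
Proof.
move=> gen sg0 x y p q xy pq exy epq.
by apply: gen => //; rewrite (slope_tie sg0 xy exy) (slope_tie sg0 pq epq).
Qed.

Lemma max_weight_rate_lt (sg e : R) f g : generic k -> sg != 0 ->
  incr f -> incr g -> f != g ->
  max_weight_basis (column_basis A) (slope k sg e) (phases f) ->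
  max_weight_basis (column_basis A) (slope k sg e) (phases g) ->
  forall h, incr h -> minor A h != 0 -> h != f -> h != g -> rate k sg e h < rate k sg e f.
Proof.
move=> gen sg0 fi gi fg maxf maxg h hi hm hf hg.
have phases_neq h1 h2 : incr h1 -> incr h2 -> h1 != h2 -> phases h1 != phases h2.
  by move=> i1 i2; apply: contra => /eqP /(phases_inj i1 i2) ->.
have Bh : column_basis A (phases h) by exists h.
rewrite !rate_phases // lt_neqAle maxf.2 // andbT; apply: contra hg => /eqP eqw.
have maxh : max_weight_basis (column_basis A) (slope k sg e) (phases h).
  by split => // S BS; rewrite eqw maxf.2.
apply/eqP; apply: (phases_inj hi gi); apply/esym.
apply: (max_weight_bases_at_most_two (@column_basis_exchange _ _ _ A) (slope_tie_unique gen sg0)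
  maxf maxg maxh);
  by apply: phases_neq; rewrite // eq_sym.
Qed.

End GenericTies.

Theorem proposition1 (R : realType) (N M : nat) (k th0 : 'I_M -> R)
    (A : 'M[R]_(N, M)) :
  (1 <= N)%N -> (N < M)%N ->
  (forall i j : 'I_M, (i < j)%N -> k i < k j) ->
  generic k ->
  \rank A = N ->
  (forall f : {ffun 'I_N -> 'I_M}, incr f -> minor A f != 0 -> 0 < minor A f) ->
  forall (t sg : R), (sg = 1 \/ sg = -1) ->
  forall (a c0 b : R) (f g : {ffun 'I_N -> 'I_M}),
    a < c0 -> c0 < b ->
    (forall c, a < c -> c < c0 -> dominant k th0 A t sg c f) ->
    (forall c, c0 < c -> c < b -> dominant k th0 A t sg c g) ->
    f != g ->
    exists i j : 'I_M,
      [/\ i \in phases f, j \in phases g, i != j,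
          phases f :\ i = phases g :\ j
        & [/\ (* transition along the line L_ij : theta_i = theta_j,
                 i.e. x = -(k_i + k_j) y + const *)
              c0 = - (k i + k j),
              (* tau ~ C_i e^{theta(i,..)} + C_j e^{theta(j,..)} along L_ij *)
              (forall s : R,
                 ((tau k th0 A (s - (k i + k j) * (sg * r)) (sg * r) t /
                  (term k th0 A f (s - (k i + k j) * (sg * r)) (sg * r) t
                   + term k th0 A g (s - (k i + k j) * (sg * r)) (sg * r) t)) - 1)
                 @[r --> +oo] --> 0),
              (* u ~ 1/2 (k_i - k_j)^2 sech^2 [ (theta_i - theta_j)/2 + const ] *)
              (forall s : R,
                 (u k th0 A (s - (k i + k j) * (sg * r)) (sg * r) t
                  - 2^-1 * (k i - k j) ^+ 2 *
                    (sech ((phase k th0 i (s - (k i + k j) * (sg * r)) (sg * r) t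
                            - phase k th0 j (s - (k i + k j) * (sg * r)) (sg * r) t
                            + ln ((minor A f * vand k f) / (minor A g * vand k g)))
                           / 2)) ^+ 2)
                 @[r --> +oo] --> 0)
            & (* dispersion relation -4 w l_x + l_x^4 + 3 l_y^2 = 0 *)
              - 4 * (k i ^+ 3 - k j ^+ 3) * (k i - k j) + (k i - k j) ^+ 4
                + 3 * (k i ^+ 2 - k j ^+ 2) ^+ 2 = 0]].
Proof.
move=> _ _ k_incr k_gen _ minor_pos t sg sg1 a c0 b f g ac0 c0b domf domg fg.
have sg0 : sg != 0 by case: sg1 => ->; rewrite ?oppr_eq0 oner_eq0.
have [fi fm _] := domf ((a + c0) / 2) ltac:(lra) ltac:(lra).
have [gi gm _] := domg ((c0 + b) / 2) ltac:(lra) ltac:(lra).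
have maxf := dominant_max_weight k_incr minor_pos ac0 domf (or_intror erefl).
have maxg := dominant_max_weight k_incr minor_pos c0b domg (or_introl erefl).
have phfg : phases f != phases g by apply: contra fg => /eqP /(phases_inj fi gi) ->.
have [p [q [pS qS wpq fgpq]]] := max_weight_bases_adjacent
  (@column_basis_exchange _ _ _ A) (slope_tie_unique k_incr k_gen sg0) maxf maxg phfg.
move: pS qS; rewrite !inE => /andP [pg pf] /andP [qf qg].
have pq : p != q by apply: contraNneq qf => <-.
have c0E : c0 = - (k p + k q) by rewrite (slope_tie k_incr sg0 pq wpq) opprK.
have rate_eq : rate k sg c0 g = rate k sg c0 f.
  by apply/eqP; rewrite eq_le !rate_phases // maxf.2 ?maxg.2 //; [exists f|exists g].
have rate_lt := max_weight_rate_lt k_incr k_gen sg0 fi gi fg maxf maxg.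
rewrite c0E in rate_eq rate_lt; have gf : g != f by rewrite eq_sym.
exists p, q; split => //; split => //.
- move=> s; apply/subr_cvg0.
  exact: (tau_line_cvg th0 k_incr minor_pos t s fi gi fm gm gf rate_eq rate_lt).
- move=> s; under eq_fun => r do
    rewrite (soliton_profile th0 k_incr minor_pos _ _ _ fi gi fm gm pf qg fgpq)
            (term_ratio_g th0 k_incr minor_pos t s fi fm rate_eq r).
  by apply/subr_cvg0; apply: u_line_cvg fi gi fm gm gf rate_eq rate_lt.
- by ring.
Qed.
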